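(* Let $X$ be a separable metric space with Borel $\sigma$-algebra $\mathcal B(X)$ and universal $\sigma$-algebra $\mathscr U(X)$, and let $\mathbb P$ be the completion of a (probability) measure on $\mathcal B(X)$ restricted to $\mathscr U(X)$. Let $A\mapsto A^\epsilon$ be a set operation on subsets of $X$ such that $A^\epsilon\in\mathscr U(X)$ whenever $A\in\mathscr U(X)$, and such that for every sequence of sets $\{A_n\}$, $$\bigcup_{n\in\mathbb N}A_n^\epsilon=\Big(\bigcup_{n\in\mathbb N}A_n\Big)^\epsilon,\qquad \bigcap_{n\in\mathbb N}A_n^\epsilon\supseteq\Big(\bigcap_{n\in\mathbb N}A_n\Big)^\epsilon.$$ Define $R^\epsilon(A)=\int(1-\eta(x))\mathbb 1_{A^\epsilon}(x)+\eta(x)\mathbb 1_{(A^C)^\epsilon}(x)\,d\mathbb P$ for $A\in\mathscr U(X)$. Assume that, given any decreasing minimizing sequence $\{B_n\}\subseteq\mathscr U(X)$ of $R^\epsilon$, one can find a decreasing minimizing sequence $\{C_n\}\subseteq\mathscr U(X)$ for which $\bigcap_{n=1}^\infty C_n^\epsilon\subseteq\big(\bigcap_{n=1}^\infty C_n\big)^\epsilon$ up to a $\mathbb P$-null set. Then there exists a minimizer of $R^\epsilon$ in $\mathscr U(X)$.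
   Context: $\mathcal D$ is a probability distribution on $X\times\{-1,+1\}$, $\eta(x)=\mathcal D(Y=+1\mid x)\in[0,1]$ is measurable, and $\mathbb P$ is the marginal on $X$. $\mathscr U(X)$ is the intersection over all $\sigma$-finite Borel measures $\nu$ on $X$ of the completion $\sigma$-algebras $\mathcal L_\nu(X)$. A sequence $\{A_n\}\subseteq\mathscr U(X)$ is minimizing if $R^\epsilon(A_n)\to\inf_{S\in\mathscr U(X)}R^\epsilon(S)$; it is decreasing if $A_{n+1}\subseteq A_n$. *)

From HB Require Import structures.
From mathcomp Require Import all_boot all_order all_algebra.
From mathcomp Require Import all_classical all_reals all_analysis.
Set Implicit Arguments. Unset Strict Implicit. Unset Printing Implicit Defensive.
Import Order.TTheory GRing.Theory Num.Theory.
Local Open Scope classical_set_scope.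
Local Open Scope ring_scope.

Definition separable_space (T : topologicalType) : Prop :=
  exists D : set T, countable D /\ dense D.

Definition borel_type (T : ptopologicalType) : measurableType _ := g_sigma_algebraType (@open T).

Definition completion_sets (R : realType) (T : ptopologicalType)
    (nu : {measure set (borel_type T) -> \bar R}) (A : set T) : Prop :=
  exists B : set (borel_type T), measurable B /\
    nu.-negligible ((A `\` B) `|` (B `\` A)).

Definition universally_measurable (R : realType) (T : ptopologicalType)
    (A : set T) : Prop :=
  forall nu : {measure set (borel_type T) -> \bar R},
    sigma_finite setT nu -> completion_sets nu A.

(* The completion of a (probability) measure P on the Borel sets, realised as
   the Caratheodory extension of P (whose sigma-algebra is the P-completion of
   the Borel sigma-algebra, which contains U(X)). *)
Notation completed_P P := (@completed_measure_extension _ _ _ P).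

Definition adv_risk (R : realType) (T : ptopologicalType)
    (P : probability (borel_type T) R) (eta : T -> R)
    (eps : set T -> set T) (A : set T) : \bar R :=
  (\int[completed_P P]_x
     ((1 - eta x) * \1_(eps A) x + eta x * \1_(eps (~` A)) x)%:E)%E.

From HB Require Import structures.
From mathcomp Require Import all_boot all_order all_algebra.
From mathcomp Require Import all_classical all_reals all_analysis.
From mathcomp Require Import measurable_realfun lra.
Set Implicit Arguments. Unset Strict Implicit. Unset Printing Implicit Defensive.
Import Order.TTheory GRing.Theory Num.Theory.
Local Open Scope classical_set_scope.
Local Open Scope ring_scope.

(* Commuting with countable unions makes [eps] monotone with
   [eps (A `|` B) = eps A `|` eps B], so the pointwise loss, hence the risk R,
   is submodular: R(A ∩ B) + R(A ∪ B) <= R(A) + R(B).  Pick T_k with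
   R(T_k) < m + 1/(k+1) - 1/(k+2), m the infimum; submodularity and
   R(A ∪ B) >= m telescope to R(T_n ∩ ... ∩ T_(n+j)) <= m + 1/(n+1).
   By Fatou, R(A) <= liminf R(B_j) as soon as every point of eps A is eventually
   in eps B_j and every point of eps (~A) eventually in eps (~B_j).  Since
   eps (~ ∩_k T_(n+k)) = ∪_k eps (~T_(n+k)), this applies to the intersections
   ∩_k T_(n+k) and then to their increasing union liminf_k T_k, whose risk is
   therefore at most m + 1/(N+1) for every N. *)

Section integral_le_eventually.
Local Open Scope ereal_scope.
Context d (T : measurableType d) (R : realType) (mu : {measure set T -> \bar R}).

Lemma measurable_fun_limn_einf (g : (T -> \bar R)^nat) :
  (forall n, measurable_fun setT (g n)) ->
  measurable_fun setT (fun x => limn_einf (g^~ x)).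
Proof.
move=> mg; apply: (emeasurable_fun_cvg (fun n x => einfs (g^~ x) n)) => [n|x _].
  exact: measurable_fun_einfs.
rewrite limn_einf_lim; exact: is_cvg_einfs.
Qed.

Lemma ge0_integral_le_eventually (f : T -> \bar R) (g : (T -> \bar R)^nat)
    (c : \bar R) :
  measurable_fun setT f -> (forall n, measurable_fun setT (g n)) ->
  (forall x, 0 <= f x) -> (forall n x, 0 <= g n x) ->
  (forall x, \forall n \near \oo, f x <= g n x) ->
  (forall n, \int[mu]_x g n x <= c) ->
  \int[mu]_x f x <= c.
Proof.
move=> mf mg f0 g0 fg gc.
apply: (@le_trans _ _ (\int[mu]_x limn_einf (g^~ x))).
  apply: ge0_le_integral => //; first exact: measurable_fun_limn_einf.
  move=> x _; have [N _ fgN] := fg x.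
  rewrite limn_einf_lim; apply: lime_ge; first exact: is_cvg_einfs.
  exists N => // n /= Nn; apply: le_ereal_inf_tmp => _ [k /= nk <-].
  exact/fgN/(leq_trans Nn).
apply: le_trans (fatou _ _ _ _) _ => //.
rewrite limn_einf_lim; apply: lime_le; first exact: is_cvg_einfs.
apply: nearW => n; apply: ge_ereal_inf.
by exists (\int[mu]_x g n x); first by exists n => /=.
Qed.

End integral_le_eventually.

Section universally_measurable.
Context (R : realType) (X : ptopologicalType).
Local Notation um := (@universally_measurable R X).

Lemma completion_setsC (nu : {measure set (borel_type X) -> \bar R}) A :
  completion_sets nu A -> completion_sets nu (~` A).
Proof.
move=> [B [mB nAB]]; exists (~` B); split; first exact: measurableC.
by apply: negligibleS nAB => x [[nAx /contrapT Bx]|[nBx /contrapT Ax]];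
  [right|left].
Qed.

Lemma completion_sets_bigcup (nu : {measure set (borel_type X) -> \bar R})
    (A : (set X)^nat) :
  (forall n, completion_sets nu (A n)) -> completion_sets nu (\bigcup_n A n).
Proof.
move=> /choice[B AB]; exists (\bigcup_n B n); split.
  by apply: bigcupT_measurable => n; case: (AB n).
apply: (@negligibleS _ _ _ nu (\bigcup_n ((A n `\` B n) `|` (B n `\` A n)))).
  move=> x [[[n _ Ax] nBx]|[[n _ Bx] nAx]]; exists n => //.
  - by left; split => // Bnx; apply: nBx; exists n.
  - by right; split => // Anx; apply: nAx; exists n.
by apply: negligible_bigcup => n; case: (AB n).
Qed.

Lemma universally_measurableC A : um A -> um (~` A).
Proof. by move=> umA nu nu_sf; apply/completion_setsC/umA. Qed.

Lemma universally_measurable_bigcup (A : (set X)^nat) :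
  (forall n, um (A n)) -> um (\bigcup_n A n).
Proof. by move=> umA nu nu_sf; apply: completion_sets_bigcup => n; apply: umA. Qed.

Lemma universally_measurable_bigcap (A : (set X)^nat) :
  (forall n, um (A n)) -> um (\bigcap_n A n).
Proof.
move=> umA; rewrite -[X in um X]setCK setC_bigcap.
by apply/universally_measurableC/universally_measurable_bigcup => n;
  apply: universally_measurableC.
Qed.

Lemma universally_measurableT : um setT.
Proof.
move=> nu _; exists setT; split => //.
by apply: negligibleS (negligible_set0 nu) => x [[_ []]|[_ []]].
Qed.

Lemma universally_measurableI A B : um A -> um B -> um (A `&` B).
Proof.
move=> umA umB; rewrite -bigcap2E.
by apply: universally_measurable_bigcap => -[|[|n]] //=; exact: universally_measurableT.
Qed.

Lemma universally_measurableU A B : um A -> um B -> um (A `|` B).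
Proof.
move=> umA umB; rewrite -[A `|` B]setCK setCU.
by apply/universally_measurableC/universally_measurableI;
  apply: universally_measurableC.
Qed.

End universally_measurable.

Section completed_measurable.
Context (R : realType) (X : ptopologicalType).
Variable P : {sigma_finite_measure set (borel_type X) -> \bar R}.
Local Notation I := (caratheodory_type (P^*)%mu).

Lemma completed_measurable_borel (B : set X) :
  measurable (B : set (borel_type X)) -> measurable (B : set I).
Proof. exact: caratheodory_measurable_mu_ext. Qed.

Lemma completed_measurable_negligible (N : set X) :
  P.-negligible (N : set (borel_type X)) -> measurable (N : set I).
Proof.
move=> [M [mM PM0 NM]]; apply: measure_is_complete_caratheodory.
exists M; split => //; first exact: completed_measurable_borel.
exact: (etrans (measurable_mu_extE _ mM) PM0).
Qed.

Lemma completed_measurable_universally (A : set X) :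
  universally_measurable R A -> measurable (A : set I).
Proof.
move=> umA; have [B [mB PAB0]] := umA P (sigma_finiteT P).
have mAB : measurable ((A `\` B) : set I).
  by apply: completed_measurable_negligible; apply: negligibleS PAB0 => x; left.
have mBA : measurable ((B `\` A) : set I).
  by apply: completed_measurable_negligible; apply: negligibleS PAB0 => x; right.
have -> : A = (B `\` (B `\` A)) `|` (A `\` B).
  apply/seteqP; split => x.
    by move=> Ax; have [Bx|nBx] := pselect (B x); [left; split => // -[]|right].
  by move=> [[Bx nBAx]|[]] //; apply: contrapT => nAx; exact: nBAx.
by apply: measurableU => //; apply: measurableD => //; exact: completed_measurable_borel.
Qed.

End completed_measurable.

Section indicator.
Context (T : Type) (R : numDomainType).

Lemma le_indic (A B : set T) x : (A x -> B x) -> \1_A x <= \1_B x :> R.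
Proof.
move=> ABx; rewrite !indicE.
by have [/set_mem/ABx/mem_set ->|_] := boolP (x \in A); rewrite ?ler0n.
Qed.

Lemma indicI_addU (A B : set T) x :
  \1_(A `&` B) x + \1_(A `|` B) x = \1_A x + \1_B x :> R.
Proof.
by rewrite !indicE in_setI in_setU; case: (x \in A); case: (x \in B);
  rewrite ?addr0 ?add0r.
Qed.

End indicator.

Section countably_additive_operator.
Context (T : Type) (eps : set T -> set T).
Hypothesis eps_bigcup : forall A : (set T)^nat,
  \bigcup_n eps (A n) = eps (\bigcup_n A n).

Lemma eps_setU A B : eps (A `|` B) = eps A `|` eps B.
Proof.
have -> : A `|` B = \bigcup_n (if n is 0 then A else B).
  by apply/seteqP; split => [x [Ax|Bx]|x [[|n] _]]; by [exists 0|exists 1|left|right].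
rewrite -eps_bigcup; apply/seteqP; split => [x [[|n] _]|x [epsAx|epsBx]];
  by [left|right|exists 0|exists 1].
Qed.

Lemma eps_subset A B : A `<=` B -> eps A `<=` eps B.
Proof. by move=> /setUidPr <-; rewrite eps_setU; exact: subsetUl. Qed.

Lemma le_indic_eps_submod (R : numDomainType) A B x :
  \1_(eps (A `&` B)) x + \1_(eps (A `|` B)) x
    <= \1_(eps A) x + \1_(eps B) x :> R.
Proof.
rewrite -[\1_(eps A) x + _]indicI_addU eps_setU.
apply: lerD; apply: le_indic => // epsABx.
by split; apply: eps_subset epsABx; [exact: subIsetl|exact: subIsetr].
Qed.

End countably_additive_operator.

Section adversarial_risk.
Context (R : realType) (X : ptopologicalType) (P : probability (borel_type X) R).
Variable eta : X -> R.
Hypothesis eta_meas : measurable_fun setT (eta : borel_type X -> R).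
Hypothesis eta01 : forall x, 0 <= eta x <= 1.
Variable eps : set X -> set X.
Hypothesis eps_U : forall A, universally_measurable R A ->
  universally_measurable R (eps A).
Hypothesis eps_bigcup : forall A : (set X)^nat,
  \bigcup_n eps (A n) = eps (\bigcup_n A n).

Local Notation I := (caratheodory_type (P^*)%mu).
Local Notation mu := (completed_P P).
Local Notation um := (@universally_measurable R X).
Local Notation adv_risk := (adv_risk P eta eps).

Definition adv_loss (A : set X) (x : X) : R :=
  (1 - eta x) * \1_(eps A) x + eta x * \1_(eps (~` A)) x.

Lemma adv_riskE A : adv_risk A = (\int[mu]_x (adv_loss A x)%:E)%E.
Proof. by []. Qed.

Lemma measurable_adv_loss A : um A -> measurable_fun setT (adv_loss A : I -> R).
Proof.
have meta : measurable_fun setT (eta : I -> R).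
  by move=> _ Y mY; apply: completed_measurable_borel; exact: eta_meas.
move=> umA; apply: measurable_funD; apply: measurable_funM.
- exact: measurable_funB.
- by apply: measurable_indic; apply: completed_measurable_universally; exact: eps_U.
- exact: meta.
- apply: measurable_indic; apply: completed_measurable_universally.
  by apply: eps_U; exact: universally_measurableC.
Qed.

Lemma adv_loss_ge0 A x : 0 <= adv_loss A x.
Proof.
have /andP[eta0 eta1] := eta01 x.
by apply: addr_ge0; apply: mulr_ge0; rewrite ?subr_ge0.
Qed.

Lemma adv_loss_le1 A x : adv_loss A x <= 1.
Proof.
have /andP[eta0 eta1] := eta01 x.
apply: (@le_trans _ _ ((1 - eta x) * 1 + eta x * 1)); last by rewrite !mulr1 subrK.
by apply: lerD; apply: ler_wpM2l; rewrite ?subr_ge0 // indicE lern1 leq_b1.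
Qed.

Lemma adv_loss_submod A B x :
  adv_loss (A `&` B) x + adv_loss (A `|` B) x <= adv_loss A x + adv_loss B x.
Proof.
have /andP[eta0 eta1] := eta01 x.
rewrite /adv_loss addrACA -!mulrDr addrACA -!mulrDr setCI setCU.
apply: lerD; apply: ler_wpM2l; rewrite ?subr_ge0 //.
- exact: le_indic_eps_submod eps_bigcup _ _ _ _.
- by rewrite addrC; exact: le_indic_eps_submod eps_bigcup _ _ _ _.
Qed.

Lemma adv_risk_ge0 A : (0 <= adv_risk A)%E.
Proof. by apply: integral_ge0 => x _; rewrite lee_fin adv_loss_ge0. Qed.

Lemma adv_risk_le1 A : um A -> (adv_risk A <= 1)%E.
Proof.
move=> umA; have int1 : (\int[mu]_x (cst 1%E) x)%E = 1%E.
  rewrite integral_cst // mul1e.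
  exact: etrans (measurable_mu_extE P (@measurableT _ (borel_type X))) (probability_setT P).
rewrite -[X in (_ <= X)%E]int1; apply: ge0_le_integral => //.
- by move=> x _; rewrite lee_fin adv_loss_ge0.
- exact/measurable_EFinP/measurable_adv_loss.
- by move=> x _; rewrite lee_fin adv_loss_le1.
Qed.

Definition risk A := fine (adv_risk A).

Lemma adv_risk_fineE A : um A -> adv_risk A = (risk A)%:E.
Proof.
move=> umA; rewrite /risk fineK // ge0_fin_numE ?adv_risk_ge0 //.
exact: le_lt_trans (adv_risk_le1 umA) (ltry _).
Qed.

Lemma risk_submod A B : um A -> um B ->
  risk (A `&` B) + risk (A `|` B) <= risk A + risk B.
Proof.
move=> umA umB; have umAB := universally_measurableI umA umB.
have umAuB := universally_measurableU umA umB.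
have mloss C : um C -> measurable_fun setT (fun x : I => (adv_loss C x)%:E).
  by move=> umC; exact/measurable_EFinP/measurable_adv_loss.
have loss0 C (x : I) : setT x -> (0 <= (adv_loss C x)%:E)%E.
  by rewrite lee_fin adv_loss_ge0.
rewrite -lee_fin !EFinD -!adv_risk_fineE // !adv_riskE.
rewrite -ge0_integralD; [|exact: measurableT|exact: loss0|exact: mloss|exact: loss0|exact: mloss].
rewrite -ge0_integralD; [|exact: measurableT|exact: loss0|exact: mloss|exact: loss0|exact: mloss].
apply: ge0_le_integral.
- exact: measurableT.
- by move=> x _; apply: adde_ge0; exact: loss0.
- by apply: emeasurable_funD; exact: mloss.
- by apply: emeasurable_funD; exact: mloss.
- by move=> x _; rewrite -!EFinD lee_fin adv_loss_submod.
Qed.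

Lemma risk_le_eventually A (B : (set X)^nat) c : um A -> (forall n, um (B n)) ->
  (forall x, eps A x -> \forall n \near \oo, eps (B n) x) ->
  (forall x, eps (~` A) x -> \forall n \near \oo, eps (~` B n) x) ->
  (forall n, risk (B n) <= c) -> risk A <= c.
Proof.
move=> umA umB epsAB epsCAB Bc.
rewrite -lee_fin -adv_risk_fineE // adv_riskE.
apply: (ge0_integral_le_eventually (g := fun n (x : I) => (adv_loss (B n) x)%:E)).
- exact/measurable_EFinP/measurable_adv_loss.
- by move=> n; exact/measurable_EFinP/measurable_adv_loss.
- by move=> x; rewrite lee_fin adv_loss_ge0.
- by move=> n x; rewrite lee_fin adv_loss_ge0.
- move=> x; have /andP[eta0 eta1] := eta01 x.
  have evAB : \forall n \near \oo, eps A x -> eps (B n) x.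
    by have [/epsAB|nAx] := pselect (eps A x); [apply: filterS|apply: nearW].
  have evCAB : \forall n \near \oo, eps (~` A) x -> eps (~` B n) x.
    by have [/epsCAB|nCAx] := pselect (eps (~` A) x); [apply: filterS|apply: nearW].
  apply: filterS2 evAB evCAB => n hAB hCAB.
  rewrite lee_fin; apply: lerD; apply: ler_wpM2l; rewrite ?subr_ge0 //;
    exact: le_indic.
- by move=> n; rewrite -adv_riskE adv_risk_fineE // lee_fin.
Qed.

Local Notation inf := (ereal_inf [set adv_risk S | S in um]).

Lemma adv_risk_inf_fin_num : inf \is a fin_num.
Proof.
have inf_ge0 : (0 <= inf)%E.
  by apply: le_ereal_inf_tmp => _ [S _ <-]; exact: adv_risk_ge0.
rewrite ge0_fin_numE //; apply: (@le_lt_trans _ _ 1%E); last exact: ltry.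
apply: ge_ereal_inf; exists (adv_risk setT); first by exists setT => //; exact: universally_measurableT.
exact/adv_risk_le1/universally_measurableT.
Qed.

Definition inf_risk := fine inf.

Lemma inf_risk_le S : um S -> inf_risk <= risk S.
Proof.
move=> umS; rewrite -lee_fin -adv_risk_fineE // fineK ?adv_risk_inf_fin_num //.
by apply: ereal_inf_lbound; exists S.
Qed.

Lemma exists_risk_lt_inf e : 0 < e -> exists S, um S /\ risk S < inf_risk + e.
Proof.
move=> e0; have [_ [S umS <-] SE] := lb_ereal_inf_adherent e0 adv_risk_inf_fin_num.
exists S; split => //.
by rewrite -lte_fin EFinD -adv_risk_fineE // fineK ?adv_risk_inf_fin_num.
Qed.

Section near_minimizers.
Let delta (k : nat) : R := (k.+1%:R)^-1.
Variable T : (set X)^nat.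
Hypothesis umT : forall k, um (T k).
Hypothesis risk_T : forall k, risk (T k) <= inf_risk + (delta k - delta k.+1).

Let delta_gt0 k : 0 < delta k.
Proof. by rewrite invr_gt0 ltr0n. Qed.

Let delta_le k l : (k <= l)%N -> delta l <= delta k.
Proof. by move=> kl; rewrite lef_pV2 ?posrE ?ltr0n // ler_nat. Qed.

Let capn (n j : nat) := \big[setI/setT]_(k < j.+1) T (n + k)%N.

Let um_capn n j : um (capn n j).
Proof.
apply: (big_ind um); [exact: universally_measurableT|exact: universally_measurableI|].
by move=> k _; exact: umT.
Qed.

Let capn_sub n j k : (k <= j)%N -> capn n j `<=` T (n + k)%N.
Proof. by move=> kj; rewrite /capn -(bigcap_mkord _ (fun k => T (n + k)%N)) => x; apply. Qed.

Let risk_capn n j : risk (capn n j) + delta (n + j)%N.+1 <= inf_risk + delta n.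
Proof.
elim: j => [|j IH].
  by have := risk_T n; rewrite /capn big_ord1 !addn0; lra.
have -> : capn n j.+1 = capn n j `&` T (n + j.+1)%N by rewrite /capn big_ord_recr.
have := risk_submod (um_capn n j) (umT (n + j.+1)%N).
have := inf_risk_le (universally_measurableU (um_capn n j) (umT (n + j.+1)%N)).
have := risk_T (n + j.+1)%N; rewrite !addnS; lra.
Qed.

Let tailcap (n : nat) := \bigcap_k T (n + k)%N.

Let risk_tailcap n : risk (tailcap n) <= inf_risk + delta n.
Proof.
apply: (@risk_le_eventually _ (capn n)) => //.
- exact: universally_measurable_bigcap.
- move=> x epsx; apply: nearW => j; apply: eps_subset epsx => //.
  by move=> y Ty; rewrite /capn -(bigcap_mkord _ (fun k => T (n + k)%N)) => k _; exact: Ty.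
- move=> x; rewrite /tailcap setC_bigcap -eps_bigcup => -[k _ epsx].
  exists k => // j /= kj; apply: eps_subset epsx => //.
  exact/subsetC/capn_sub.
- by move=> j; have := risk_capn n j; have := delta_gt0 (n + j)%N.+1; lra.
Qed.

Let tailcap_sub n n' : (n <= n')%N -> tailcap n `<=` tailcap n'.
Proof. by move=> nn' x Tx k _; rewrite -(subnKC nn') -addnA; exact: Tx. Qed.

Let liminfT := \bigcup_n tailcap n.

Let risk_liminfT N : risk liminfT <= inf_risk + delta N.
Proof.
apply: (@risk_le_eventually _ (fun j => tailcap (N + j)%N)).
- by apply: universally_measurable_bigcup => n; exact: universally_measurable_bigcap.
- by move=> j; exact: universally_measurable_bigcap.
- move=> x; rewrite /liminfT -eps_bigcup => -[n _ epsx].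
  exists n => // j /= nj; apply: eps_subset epsx => //.
  by apply: tailcap_sub; rewrite (leq_trans nj) ?leq_addl.
- move=> x epsx; apply: nearW => j; apply: eps_subset epsx => //.
  by apply: subsetC; exact: bigcup_sup.
- move=> j; apply: le_trans (risk_tailcap (N + j)%N) _.
  by rewrite lerD2l delta_le ?leq_addr.
Qed.

Lemma risk_liminf_le_inf : risk liminfT <= inf_risk.
Proof.
apply/ler_addgt0Pr => e e0; have [N _ Ne] := near_infty_natSinv_lt (PosNum e0).
by apply: le_trans (risk_liminfT N) _; rewrite lerD2l; exact: ltW (Ne N (leqnn N)).
Qed.

End near_minimizers.

Lemma exists_adv_risk_minimizer :
  exists A, um A /\ forall S, um S -> (adv_risk A <= adv_risk S)%E.
Proof.
have /choice[T nearT] k :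
    exists S, um S /\ risk S < inf_risk + ((k.+1%:R)^-1 - (k.+2%:R)^-1).
  by apply: exists_risk_lt_inf; rewrite subr_gt0 ltf_pV2 ?posrE ?ltr0n // ltr_nat.
have umT k : um (T k) by case: (nearT k).
have umG : um (\bigcup_n \bigcap_k T (n + k)%N).
  by apply: universally_measurable_bigcup => n; exact: universally_measurable_bigcap.
exists (\bigcup_n \bigcap_k T (n + k)%N); split => // S umS.
rewrite !adv_risk_fineE // lee_fin (le_trans _ (inf_risk_le umS)) //.
by apply: risk_liminf_le_inf umT _ => k; apply/ltW; case: (nearT k).
Qed.

End adversarial_risk.

Unset Implicit Arguments.

Theorem theorem10 (R : realType) (X : pseudoPMetricType R)
  (Xhaus : hausdorff_space X) (Xsep : separable_space X)
  (P : probability (borel_type X) R)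
  (eta : X -> R)
  (eta_meas : measurable_fun setT (eta : borel_type X -> R))
  (eta01 : forall x, 0 <= eta x <= 1)
  (eps : set X -> set X)
  (eps_U : forall A, universally_measurable R A ->
                     universally_measurable R (eps A))
  (eps_cup : forall A : nat -> set X,
     \bigcup_n eps (A n) = eps (\bigcup_n A n))
  (eps_cap : forall A : nat -> set X,
     eps (\bigcap_n A n) `<=` \bigcap_n eps (A n))
  (Hseq : forall B : nat -> set X,
     (forall n, universally_measurable R (B n)) ->
     (forall n, B n.+1 `<=` B n) ->
     (adv_risk P eta eps \o B) @ \oo -->
        ereal_inf [set adv_risk P eta eps S | S in @universally_measurable R X] ->
     exists C : nat -> set X,
       (forall n, universally_measurable R (C n)) /\
       (forall n, C n.+1 `<=` C n) /\
       (adv_risk P eta eps \o C) @ \oo -->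
          ereal_inf [set adv_risk P eta eps S | S in @universally_measurable R X] /\
       (completed_P P).-negligible
          ((\bigcap_n eps (C n)) `\` eps (\bigcap_n C n))) :
  exists A : set X, universally_measurable R A /\
    forall S : set X, universally_measurable R S ->
      (adv_risk P eta eps A <= adv_risk P eta eps S)%E.
Proof. exact: (@exists_adv_risk_minimizer R X P eta eta_meas eta01 eps eps_U eps_cup). Qed.
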